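(* Let $\mathcal{G}=\{G_n\}$ be a graph sequence and $p$ a prime. Then $\beta_{\mathbb{Q}}(\mathcal{G})\le\beta_{\mathbb{F}_p}(\mathcal{G})\le c(\mathcal{G})-1$.
   Context: A graph sequence is a sequence $\mathcal{G}=\{G_n\}$ of finite simple graphs with uniformly bounded vertex degrees and $|V(G_n)|\to\infty$. For graph sequences with $V(H_n)=V(G_n)$, $\mathcal{H}\prec\mathcal{G}$ means there is an integer $L>0$ with $d_{G_n}(x,y)\le L\,d_{H_n}(x,y)$ for all $n,x,y$ (shortest path metrics), and $\mathcal{G}\simeq\mathcal{H}$ means $\mathcal{H}\prec\mathcal{G}$ and $\mathcal{G}\prec\mathcal{H}$. $e(\mathcal{G})=\liminf_n |E(G_n)|/|V(G_n)|$, $c(\mathcal{G})=\inf_{\mathcal{H}\simeq\mathcal{G}}e(\mathcal{H})$. For a field $K$ and finite graph $G$, $\varepsilon_K(G)$ is the $K$-vector space spanned by oriented edges with $(x,y)=-(y,x)$; a cycle $(x_1,\dots,x_m,x_1)$ gives the vector $\sum_{i=1}^{m-1}(x_i,x_{i+1})+(x_m,x_1)$; $C^q_K(G)$ is the subspace spanned by vectors of cycles of length at most $q$. $s^q_K(\mathcal{G})=\liminf_n \frac{|E(G_n)|-\dim_K C^q_K(G_n)}{|V(G_n)|}-1$, $\beta_K(\mathcal{G})=\inf_q s^q_K(\mathcal{G})$. $\mathbb{F}_p$ is the field with $p$ elements. *)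

From HB Require Import structures.
From mathcomp Require Import all_boot all_order all_algebra.
From mathcomp Require Import all_classical all_reals.
From mathcomp Require Import ereal sequences.

Set Implicit Arguments.
Unset Strict Implicit.
Unset Printing Implicit Defensive.

Import Order.TTheory GRing.Theory Num.Theory.
Local Open Scope classical_set_scope.
Local Open Scope ring_scope.

Definition adj_seq (N : nat -> nat) := forall n : nat, rel 'I_(N n).

Definition is_graph_seq (N : nat -> nat) (adj : adj_seq N) : Prop :=
  [/\ (forall n, symmetric (adj n)),
      (forall n, irreflexive (adj n)),
      (exists D : nat, forall n (x : 'I_(N n)), (#|[set y | adj n x y]| <= D)%N)
    & (forall M : nat, exists n0, forall n, (n0 <= n)%N -> (M <= N n)%N)].

(* d_e(x,y) <= k  (shortest-path metric, possibly infinite) *)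
Definition dist_le (T : finType) (e : rel T) (x y : T) (k : nat) : Prop :=
  exists s : seq T, [/\ (size s <= k)%N, path e x s & last x s = y].

Definition gprec (N : nat -> nat) (H G : adj_seq N) : Prop :=
  exists L : nat, (0 < L)%N /\
    forall n (x y : 'I_(N n)) (k : nat),
      dist_le (H n) x y k -> dist_le (G n) x y (L * k).

Definition gequiv (N : nat -> nat) (G H : adj_seq N) : Prop :=
  gprec H G /\ gprec G H.

(* undirected edge set, each edge counted once *)
Definition edges (m : nat) (e : rel 'I_m) : {set 'I_m * 'I_m} :=
  [set p | e p.1 p.2 && (p.1 < p.2)%N].

Section WithR.
Variable R : realType.

Definition edge_density (N : nat -> nat) (adj : adj_seq N) : \bar R :=
  limn_einf (fun n => ((#|edges (adj n)|%:R / (N n)%:R : R))%:E).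

Definition cost (N : nat -> nat) (adj : adj_seq N) : \bar R :=
  ereal_inf [set edge_density H | H in
               [set H : adj_seq N | is_graph_seq H /\ gequiv adj H]].

Section Cycles.
Variable K : fieldType.

(* the oriented edge (x,y) in ε_K(G), realised inside 'M[K]_m as the
   antisymmetric matrix E_xy - E_yx, so that (x,y) = -(y,x) *)
Definition oedge (m : nat) (x y : 'I_m) : 'M[K]_m :=
  delta_mx x y - delta_mx y x.

Definition is_cycle (m l : nat) (e : rel 'I_m) (c : l.-tuple 'I_m) : bool :=
  [&& (3 <= l)%N, uniq c & cycle e c].

Definition cycle_vec (m l : nat) (c : l.-tuple 'I_m) : 'M[K]_m :=
  \sum_(i < l) oedge (nth (tnth_default c i) c i)
                     (nth (tnth_default c i) c (i.+1 %% l)).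

(* C^q_K(G) as a row space (vectors flattened by mxvec) *)
Definition cycle_space (m q : nat) (e : rel 'I_m) :=
  (\sum_(l < q.+1) \sum_(c : l.-tuple 'I_m | is_cycle e c)
      <<mxvec (cycle_vec c)>>)%MS.

Definition dim_cycle_space (m q : nat) (e : rel 'I_m) : nat :=
  \rank (cycle_space q e).

Definition sq (N : nat -> nat) (adj : adj_seq N) (q : nat) : \bar R :=
  limn_einf (fun n => (((#|edges (adj n)|%:R - (dim_cycle_space q (adj n))%:R)
                        / (N n)%:R : R))%:E) - 1%E.

Definition betaK (N : nat -> nat) (adj : adj_seq N) : \bar R :=
  ereal_inf [set sq adj q | q in [set: nat]].

End Cycles.
End WithR.

(* Both inequalities are rank comparisons, made for each n and then passed
   through liminf and the infimum over q (resp. over H).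

   For beta_Q <= beta_F: cycle vectors have integer coordinates, and an
   integer matrix has rank over any field F at most its rank over Q, since an
   invertible minor over F has a nonzero integer determinant.

   For beta_F <= c - 1: let H be equivalent to G, with d_G <= L1 d_H and
   d_H <= L2 d_G, and pick for every edge uv of H a G-path of length <= L1
   (a detour).  A closed walk of length <= q splits into cycles of length
   <= q, so its vector lies in C^q(G).  For q >= 2 L1 and q > L1 L2, the
   vector of a G-edge xy is, modulo C^q(G), minus the sum of the detours
   along an H-path from y to x; likewise the detour of vu is minus that
   of uv.
   Hence the |E(G)| independent edge vectors lie in C^q(G) plus a span of
   |E(H)| vectors: |E(G)| - dim C^q(G) <= |E(H)|. *)

From HB Require Import structures.
From mathcomp Require Import all_boot all_order all_algebra.
From mathcomp Require Import all_classical all_reals.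
From mathcomp Require Import ereal sequences.
From mathcomp Require Import topology normedtype.
From mathcomp Require Import zify.

Set Implicit Arguments.
Unset Strict Implicit.
Unset Printing Implicit Defensive.
Import Order.TTheory GRing.Theory Num.Theory.

Local Open Scope ring_scope.

Lemma mxrank_mxsub (F : fieldType) m n m' n' (f : 'I_m' -> 'I_m)
    (g : 'I_n' -> 'I_n) (A : 'M[F]_(m, n)) :
  (\rank (mxsub f g A) <= \rank A)%N.
Proof.
rewrite mxsubrc; apply: leq_trans (mxrankS (rowsub_sub _ _)) _.
by rewrite -mxrank_tr trmx_mxsub -[leqRHS]mxrank_tr mxrankS // rowsub_sub.
Qed.

Lemma unit_minor_rank (F : fieldType) m n (A : 'M[F]_(m, n)) :
  exists (f : 'I_(\rank A) -> 'I_m) (g : 'I_(\rank A) -> 'I_n),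
    mxsub f g A \in unitmx.
Proof.
pose f := maxrankfun A.
have fullT : row_full (rowsub f A)^T.
  by rewrite /row_full mxrank_tr; have /eqP -> := maxrowsub_free A.
exists f, (fullrankfun fullT); rewrite -unitmx_tr.
have -> : (mxsub f (fullrankfun fullT) A)^T
          = rowsub (fullrankfun fullT) (rowsub f A)^T.
  by apply/matrixP => i j; rewrite !mxE.
exact: fullrowsub_unit.
Qed.

Lemma mxrank_map_int_le (F : fieldType) (Q : numFieldType) m n
    (A : 'M[int]_(m, n)) :
  (\rank (map_mx (intr : int -> F) A) <= \rank (map_mx (intr : int -> Q) A))%N.
Proof.
have [f [g]] := unit_minor_rank (map_mx (intr : int -> F) A).
rewrite -map_mxsub unitmxE det_map_mx unitfE => detF.
have detQ : map_mx (intr : int -> Q) (mxsub f g A) \in unitmx.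
  by rewrite unitmxE det_map_mx unitfE intr_eq0; apply: contraNneq detF => ->.
by rewrite -[X in (X <= _)%N](mxrank_unit detQ) map_mxsub mxrank_mxsub.
Qed.

Lemma mxrank_sum_genmx_map (R : nmodType) (F : fieldType) (f : R -> F) k
    (s : seq 'rV[R]_k) :
  \rank (\sum_(w <- s) <<map_mx f w>>)%MS
  = \rank (map_mx f (\matrix_(i < size s) s`_i)).
Proof.
apply/eqP; rewrite eqn_leq; apply/andP; split; apply: mxrankS.
  rewrite (big_nth 0) big_mkord; apply/sumsmx_subP => i _.
  by rewrite genmxE -(rowK (fun i : 'I_(size s) => s`_i)) map_row row_sub.
apply/row_subP => i; rewrite -map_row rowK (big_nth 0) big_mkord.
by apply: (sumsmx_sup i) => //; rewrite genmxE.
Qed.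

Definition int_cycle_vec m l (c : l.-tuple 'I_m) : 'M[int]_m :=
  \sum_(i < l) let x := nth (tnth_default c i) c i in
               let y := nth (tnth_default c i) c (i.+1 %% l) in
               delta_mx x y - delta_mx y x.

Lemma map_int_cycle_vec (F : fieldType) m l (c : l.-tuple 'I_m) :
  map_mx intr (int_cycle_vec c) = cycle_vec F c.
Proof.
rewrite /int_cycle_vec (big_morph _ (@map_mxD _ _ _ _ _) (map_mx0 _ _ _)).
by apply: eq_bigr => i _; rewrite map_mxB !map_delta_mx.
Qed.

Definition int_cycle_vecs m q (e : rel 'I_m) : seq 'rV[int]_(m * m) :=
  flatten [seq [seq mxvec (int_cycle_vec c)
                | c <- enum [pred c : l.-tuple 'I_m | is_cycle e c]]
          | l : 'I_q.+1].

Lemma cycle_space_map_int (F : fieldType) m q (e : rel 'I_m) :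
  cycle_space F q e = (\sum_(w <- int_cycle_vecs q e) <<map_mx intr w>>)%MS.
Proof.
rewrite big_flatten big_map big_enum /cycle_space.
apply: eq_bigr => l _; rewrite big_map big_enum.
by apply: eq_bigr => c _; rewrite map_mxvec map_int_cycle_vec.
Qed.

Lemma dim_cycle_space_le_char0 (F : fieldType) (Q : numFieldType) m q
    (e : rel 'I_m) :
  (dim_cycle_space F q e <= dim_cycle_space Q q e)%N.
Proof.
rewrite /dim_cycle_space !cycle_space_map_int !mxrank_sum_genmx_map.
exact: mxrank_map_int_le.
Qed.

Lemma not_uniq_cat (T : eqType) (s : seq T) : ~~ uniq s ->
  exists s1 y s2 s3, s = s1 ++ y :: s2 ++ y :: s3.
Proof.
elim: s => [|z t IH] //=; rewrite negb_and negbK; case/orP.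
  by case/splitPr => p1 p2; exists [::], z, p1, p2.
by case/IH => s1 [y [s2 [s3 ->]]]; exists (z :: s1), y, s2, s3.
Qed.

Section WalkVectors.
Variables (K : fieldType) (m : nat).
Implicit Types (x y : 'I_m) (s t : seq 'I_m).

Lemma oedgexx x : oedge K x x = 0.
Proof. exact: subrr. Qed.

Lemma oedgeC x y : oedge K y x = - oedge K x y.
Proof. by rewrite /oedge opprB. Qed.

Fixpoint walk_vec x s : 'M[K]_m :=
  if s is y :: t then oedge K x y + walk_vec y t else 0.

Lemma walk_vec_cat x s t :
  walk_vec x (s ++ t) = walk_vec x s + walk_vec (last x s) t.
Proof. by elim: s x => [|y s IH] x /=; rewrite ?add0r // IH addrA. Qed.

Lemma walk_vec_loop x s1 y s2 s3 :
  walk_vec x (s1 ++ y :: s2 ++ y :: s3)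
  = walk_vec x (s1 ++ y :: s3) + walk_vec y (rcons s2 y).
Proof.
rewrite -cats1 !walk_vec_cat /= walk_vec_cat /= addr0.
move: (walk_vec x s1) (oedge _ _ y) (walk_vec y s2) (oedge _ _ y).
move: (walk_vec y s3) => f a b c d.
by rewrite -!addrA; congr (_ + (_ + _)); rewrite addrA addrC.
Qed.

Lemma walk_vec_small x s : last x s = x -> (size s < 3)%N -> walk_vec x s = 0.
Proof.
case: s => [|y [|z [|]]] //= -> _; first by rewrite oedgexx addr0.
by rewrite oedgeC !addr0 addNr.
Qed.

Lemma walk_vec_nth x s :
  walk_vec x s = \sum_(i < size s) oedge K (nth x (x :: s) i) (nth x s i).
Proof.
elim: s x => [|y s IH] x /=; first by rewrite big_ord0.
rewrite big_ord_recl IH; congr (_ + _); apply: eq_bigr => i _ /=.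
by have lt_i := ltn_ord i; rewrite add0n !(set_nth_default x y) //; apply: leqW.
Qed.

Lemma cycle_vec_walk x s : last x s = x -> (0 < size s)%N ->
  cycle_vec K (in_tuple s) = walk_vec x s.
Proof.
case: s => [|y t] //= last_t _; rewrite /cycle_vec.
under eq_bigr => i _ do
  rewrite !(set_nth_default x (tnth_default _ _)) ?ltn_pmod //.
rewrite big_ord_recr /= modnn walk_vec_nth addrC; congr (_ + _).
  by rewrite -[size t]/((size (y :: t)).-1) nth_last /= last_t.
apply: eq_bigr => i _ /=.
rewrite modn_small ?ltnS // -[nth x _ i.+1]/(nth x t i).
by have lt_i := ltn_ord i; rewrite !(set_nth_default x y) //; apply: leqW.
Qed.

Variable e : rel 'I_m.

Lemma closed_path_cycle x s : path e x s -> last x s = x -> uniq s ->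
  (3 <= size s)%N -> is_cycle e (in_tuple s).
Proof.
rewrite /is_cycle /=; case: s => [|y t] //= /andP[exy pt] last_t -> ->.
by rewrite rcons_path pt last_t exy.
Qed.

Lemma cycle_vec_sub_cycle_space q l (c : l.-tuple 'I_m) :
  is_cycle e c -> (l <= q)%N ->
  (mxvec (cycle_vec K c) <= cycle_space K q e)%MS.
Proof.
move=> cyc_c; rewrite -ltnS => lt_lq.
apply: (sumsmx_sup (Ordinal lt_lq)) => //.
by apply: (sumsmx_sup c) => //; rewrite genmxE.
Qed.

Lemma closed_walk_vec_sub q x s : path e x s -> last x s = x ->
  (size s <= q)%N -> (mxvec (walk_vec x s) <= cycle_space K q e)%MS.
Proof.
have [k] := ubnP (size s); elim: k x s => // k IH x s lt_sk ps last_s le_sq.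
have [small|big] := ltnP (size s) 3.
  by rewrite walk_vec_small // linear0 sub0mx.
have [uniq_s|] := boolP (uniq s).
  rewrite -(cycle_vec_walk last_s) ?(leq_trans _ big) //.
  apply: cycle_vec_sub_cycle_space le_sq.
  exact: closed_path_cycle ps last_s uniq_s big.
case/not_uniq_cat=> s1 [y [s2 [s3 def_s]]]; subst s.
move: ps last_s lt_sk le_sq.
rewrite walk_vec_loop linearD !size_cat /= size_cat cat_path /= cat_path /=.
move=> /and5P[ps1 es1y ps2 es2y ps3] last_s lt_sk le_sq.
apply: addmx_sub; apply: IH.
- by rewrite size_cat /=; lia.
- by rewrite cat_path /= ps1 es1y.
- by move: last_s; rewrite !last_cat /= last_cat.
- by rewrite size_cat /=; lia.
- by rewrite size_rcons; lia.
- by rewrite rcons_path ps2 es2y.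
- by rewrite last_rcons.
- by rewrite size_rcons; lia.
Qed.

End WalkVectors.

Definition edge_mx (K : fieldType) m (e : rel 'I_m)
  : 'M[K]_(#|edges e|, m * m) :=
  \matrix_(i < #|edges e|) mxvec (oedge K (enum_val i).1 (enum_val i).2).

Lemma mxrank_edge_mx (K : fieldType) m (e : rel 'I_m) :
  \rank (edge_mx K e) = #|edges e|.
Proof.
apply/eqP; apply/row_freeP.
exists (\matrix_(k, j) (k == mxvec_index (enum_val j).1 (enum_val j).2)%:R).
apply/matrixP => i j; rewrite !mxE.
under eq_bigr => k _ do rewrite mxE [X in _ * X]mxE mulr_natr mulrb.
rewrite -big_mkcond /= big_pred1_eq mxvecE /oedge !mxE.
rewrite -(inj_eq (@enum_val_inj _ (edges e))).
move: (enum_val i) (enum_val j) (enum_valP i) (enum_valP j) => [a b] [c d].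
rewrite !inE /= => /andP[_ lt_ab] /andP[_ lt_cd].
have -> : (c == b) && (d == a) = false.
  by apply/negbTE/andP => -[/eqP ec /eqP ed]; subst; lia.
by rewrite subr0 xpair_eqE (eq_sym c) (eq_sym d).
Qed.

Section EdgeCount.
Variables (K : fieldType) (m : nat) (eG eH : rel 'I_m) (L1 L2 q : nat).
Hypotheses (eG_sym : symmetric eG) (eH_sym : symmetric eH).
Hypothesis eH_dist : forall u v, eH u v -> dist_le eG u v L1.
Hypothesis eG_dist : forall x y, eG x y -> dist_le eH x y L2.
Hypotheses (le_2L1_q : (2 * L1 <= q)%N) (lt_L1L2_q : (L1 * L2 < q)%N).

Let detour_spec u v (s : seq 'I_m) :=
  eH u v ==> [&& (size s <= L1)%N, path eG u s & last u s == v].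

Let detour_exists u v : exists s, detour_spec u v s.
Proof.
have [/eH_dist[s [le_s ps last_s]]|/negPf nuv] := boolP (eH u v).
  by exists s; rewrite /detour_spec le_s ps last_s eqxx implybT.
by exists [::]; rewrite /detour_spec nuv.
Qed.

Let detour u v : seq 'I_m := xchoose (detour_exists u v).

Let detourP u v : eH u v ->
  [/\ (size (detour u v) <= L1)%N, path eG u (detour u v)
    & last u (detour u v) = v].
Proof.
move=> euv; have /implyP/(_ euv) := xchooseP (detour_exists u v).
by case/and3P=> -> -> /eqP ->.
Qed.

Let C := cycle_space K q eG.
Let W := \matrix_(i < #|edges eH|)
  mxvec (walk_vec K (enum_val i).1 (detour (enum_val i).1 (enum_val i).2)).
Let S := (C + W)%MS.

Let C_sub_S (a : 'rV[K]_(m * m)) : (a <= C)%MS -> (a <= S)%MS.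
Proof. by move/submx_trans; apply; apply: addsmxSl. Qed.

Let W_sub_S u v : (u, v) \in edges eH ->
  (mxvec (walk_vec K u (detour u v)) <= S)%MS.
Proof.
move=> uv_in; apply: submx_trans (addsmxSr C W).
apply/(eq_row_sub (enum_rank_in uv_in (u, v))).
by rewrite rowK enum_rankK_in.
Qed.

Lemma detour_vec_sub u v : eH u v ->
  (mxvec (walk_vec K u (detour u v)) <= S)%MS.
Proof.
move=> euv; have [le_uv p_uv last_uv] := detourP euv.
have [lt_uv|lt_vu|/val_inj eq_uv] := ltngtP u v.
- by apply: W_sub_S; rewrite inE /= euv lt_uv.
- have evu : eH v u by rewrite eH_sym.
  have [le_vu p_vu last_vu] := detourP evu.
  have loop_C : (mxvec (walk_vec K u (detour u v ++ detour v u)) <= C)%MS.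
    apply: closed_walk_vec_sub.
    + by rewrite cat_path p_uv last_uv.
    + by rewrite last_cat last_uv.
    + by rewrite size_cat; lia.
  rewrite walk_vec_cat last_uv in loop_C.
  rewrite -[walk_vec K u _](addrK (walk_vec K v (detour v u))) linearB.
  apply: addmx_sub; first exact: C_sub_S.
  by rewrite eqmx_opp; apply: W_sub_S; rewrite inE /= evu lt_vu.
- subst v; apply/C_sub_S/closed_walk_vec_sub => //; lia.
Qed.

Lemma path_detour_vec_sub u t : path eH u t -> exists s,
  [/\ path eG u s, last u s = last u t, (size s <= L1 * size t)%N
    & (mxvec (walk_vec K u s) <= S)%MS].
Proof.
elim: t u => [|v t IH] u /=.
  by exists [::]; split => //; rewrite linear0 sub0mx.
case/andP=> euv /IH[s [ps last_s le_s s_sub]].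
have [le_uv p_uv last_uv] := detourP euv.
exists (detour u v ++ s); split.
- by rewrite cat_path p_uv last_uv.
- by rewrite last_cat last_uv.
- by rewrite size_cat mulnS leq_add.
- by rewrite walk_vec_cat last_uv linearD addmx_sub // detour_vec_sub.
Qed.

Lemma oedge_sub x y : eG x y -> (mxvec (oedge K x y) <= S)%MS.
Proof.
move=> exy; have /eG_dist[t [le_t pt last_t]] : eG y x by rewrite eG_sym.
have [s [ps last_s le_s s_sub]] := path_detour_vec_sub pt.
have loop_C : (mxvec (walk_vec K x (y :: s)) <= C)%MS.
  apply: closed_walk_vec_sub => /=.
  + by rewrite exy ps.
  + by rewrite last_s last_t.
  + apply: leq_ltn_trans lt_L1L2_q; apply: leq_trans le_s _.
    by rewrite leq_mul2l le_t orbT.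
rewrite -[oedge K x y](addrK (walk_vec K y s)) linearB.
by apply: addmx_sub; [exact: C_sub_S | rewrite eqmx_opp].
Qed.

Theorem card_edges_le_cycle_space :
  (#|edges eG| <= dim_cycle_space K q eG + #|edges eH|)%N.
Proof.
have edge_sub_S : (edge_mx K eG <= S)%MS.
  apply/row_subP => i; rewrite rowK.
  by have := enum_valP i; rewrite inE => /andP[/oedge_sub].
rewrite -(mxrank_edge_mx K); apply: leq_trans (mxrankS edge_sub_S) _.
apply: leq_trans (mxrank_adds_leqif C W) _.
by rewrite leq_add2l rank_leq_row.
Qed.

End EdgeCount.

Lemma le_limn_einf (R : realType) (u v : nat -> \bar R) :
  (forall n, (u n <= v n)%E) -> (limn_einf u <= limn_einf v)%E.
Proof.
move=> le_uv; rewrite !limn_einf_lim; apply: lee_lim; try exact: is_cvg_einfs.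
apply: nearW => n; apply: le_ereal_inf_tmp => _ [k /= le_nk <-].
by apply: le_trans (le_uv k); apply: ereal_inf_lbound; exists k.
Qed.

Lemma le_limn_einf_div (R : realType) (f g : nat -> R) (d : nat -> nat) :
  (forall n, f n <= g n) ->
  (limn_einf (fun n => (f n / (d n)%:R)%:E)
   <= limn_einf (fun n => (g n / (d n)%:R)%:E))%E.
Proof.
move=> le_fg; apply: le_limn_einf => n; rewrite lee_fin.
by rewrite ler_wpM2r // invr_ge0 ler0n.
Qed.

Lemma betaK_le_sq (R : realType) (K : fieldType) (N : nat -> nat)
    (G : adj_seq N) q :
  (betaK R K G <= sq R K G q)%E.
Proof. by apply: ereal_inf_lbound; exists q. Qed.

Lemma gprec_adj_dist_le (N : nat -> nat) (H G : adj_seq N) : gprec H G ->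
  exists L, forall n (u v : 'I_(N n)), H n u v -> dist_le (G n) u v L.
Proof.
case=> L [_ dist_HG]; exists L => n u v huv.
by rewrite -[L]muln1; apply: dist_HG; exists [:: v]; rewrite /= huv.
Qed.

Theorem proposition3 (R : realType) (N : nat -> nat) (G : adj_seq N)
    (p : nat) :
  is_graph_seq G -> prime p ->
  ((betaK R rat G <= betaK R 'F_p G)
   /\ (betaK R 'F_p G <= cost R G - 1%E))%E.
Proof.
case=> G_sym _ _ _ _; split.
  apply: le_ereal_inf_tmp => _ [q _ <-].
  apply: le_trans (betaK_le_sq _ _ _ q) _.
  apply: leeB => //; apply: le_limn_einf_div => n.
  by rewrite lerB // ler_nat dim_cycle_space_le_char0.
rewrite leeBrDr //; apply: le_ereal_inf_tmp => _ [H [[H_sym _ _ _] [HG GH]] <-].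
have [L1 dist_HG] := gprec_adj_dist_le HG.
have [L2 dist_GH] := gprec_adj_dist_le GH.
rewrite -leeBrDr //.
apply: le_trans (betaK_le_sq _ _ _ (2 * L1 + L1 * L2).+1) _.
apply: leeB => //; apply: le_limn_einf_div => n.
rewrite lerBlDl -natrD ler_nat.
apply: card_edges_le_cycle_space (G_sym n) (H_sym n) (dist_HG n) (dist_GH n) _ _;
  lia.
Qed.
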